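(* Let $a\ge 2$ be an integer. For $i\ge 0$, let $S^{(a)}_i=\{a^{2i},a^{2i}+1,\ldots,a^{2i+1}\}$, and let $S^{(a)}=\bigcup_{i\ge0}S^{(a)}_i$. For each $i$, let $\sigma^a_i$ be a permutation of $S^{(a)}_i$ containing no 3-term arithmetic progression as a subsequence. Then: (a) the concatenation $\sigma^a_0\sigma^a_1\sigma^a_2\cdots$ contains no 4-term arithmetic progression as a subsequence, so $S^{(a)}$ is 4-free; (b) $\overline{d}(S^{(a)})=a/(a+1)$ and $\underline{d}(S^{(a)})=1/(a+1)$.
   Context: A sequence contains a $k$-term arithmetic progression as a subsequence if there are positions $i_1<\cdots<i_k$ whose entries satisfy $a_{i_{m+1}}-a_{i_m}=d$ for all $m$, for some fixed $d\neq0$ (positive or negative). A set $S$ of positive integers is $n$-free if its elements can be listed in a sequence, each element appearing exactly once, that contains no $n$-term arithmetic progression as a subsequence. For $S\subseteq\mathbb{Z}_{>0}$ with $A(n)=|S\cap[1,n]|$, the upper density is $\overline{d}(S)=\limsup_{n\to\infty} A(n)/n$ and the lower density is $\underline{d}(S)=\liminf_{n\to\infty} A(n)/n$. Every finite set of consecutive integers admits a permutation with no 3-term arithmetic progression as a subsequence. *)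

From Stdlib Require Import Reals Lia ZArith Arith List Permutation Classical ClassicalDescription.
Import ListNotations.
Open Scope R_scope.

Definition is_AP_sub (k : nat) (val : nat -> nat) (idx : nat -> nat) : Prop :=
  (forall m, (m + 1 < k)%nat -> (idx m < idx (m + 1))%nat) /\
  exists d : Z, d <> 0%Z /\
    forall m, (m + 1 < k)%nat ->
      (Z.of_nat (val (idx (m + 1)%nat)) - Z.of_nat (val (idx m)))%Z = d.

Definition list_has_AP (k : nat) (l : list nat) : Prop :=
  exists idx, is_AP_sub k (fun j => nth j l 0%nat) idx /\
              (forall m, (m < k)%nat -> (idx m < length l)%nat).

Definition stream_has_AP (k : nat) (f : nat -> nat) : Prop :=
  exists idx, is_AP_sub k f idx.

Definition n_free (n : nat) (T : nat -> Prop) : Prop :=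
  (forall x, T x -> (0 < x)%nat) /\
  ((exists l : list nat, NoDup l /\ (forall x, In x l <-> T x) /\ ~ list_has_AP n l)
   \/
   (exists f : nat -> nat, (forall i j, f i = f j -> i = j) /\
      (forall x, T x <-> exists i, f i = x) /\ ~ stream_has_AP n f)).

Definition Sa_block (a i : nat) : list nat :=
  seq (a ^ (2 * i)) (a ^ (2 * i + 1) - a ^ (2 * i) + 1).

Definition In_Sa (a x : nat) : Prop :=
  exists i : nat, (a ^ (2 * i) <= x <= a ^ (2 * i + 1))%nat.

(* The infinite concatenation sigma_0 sigma_1 sigma_2 ... : the n-th entry is the
   n-th entry of the concatenation of the first n+1 blocks (each block is
   nonempty, so this is well defined and is the n-th entry of the full
   concatenation). *)
Definition concat_stream (sigma : nat -> list nat) (n : nat) : nat :=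
  nth n (concat (map sigma (seq 0 (n + 1)))) 0%nat.

Definition countA (T : nat -> Prop) (n : nat) : nat :=
  length (filter (fun x => if excluded_middle_informative (T x) then true else false)
                 (seq 1 n)).

Definition density_ratio (T : nat -> Prop) (n : nat) : R :=
  INR (countA T n) / INR n.

Definition is_limsup (u : nat -> R) (L : R) : Prop :=
  (forall eps, eps > 0 -> exists N, forall n, (n >= N)%nat -> u n < L + eps) /\
  (forall eps, eps > 0 -> forall N, exists n, (n >= N)%nat /\ u n > L - eps).

Definition is_liminf (u : nat -> R) (L : R) : Prop :=
  (forall eps, eps > 0 -> exists N, forall n, (n >= N)%nat -> u n > L - eps) /\
  (forall eps, eps > 0 -> forall N, exists n, (n >= N)%nat /\ u n < L + eps).

(* A 4-term progression v0, v1, v2, v3 read along the concatenation visits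
   blocks in nondecreasing order, and every element of a later block is at
   least a^2 >= 2 times every element of an earlier one.  If v2 lay in a later
   block than v1, the common difference would be at least v1, forcing v0 <= 0;
   the same argument applied to v1, v2, v3 puts v3 in the block of v2.  So
   v1, v2, v3 is a 3-term progression inside a single block, which the blocks
   avoid.

   For the densities, summing the geometric block sizes gives
   (a+1) A(a^(2k) - 1) = a^(2k) - 1 + (a+1) k; the counting function then grows
   with slope 1 along the block [a^(2k), a^(2k+1)] and stays flat across the gap
   up to a^(2k+2).  The ratio A(n)/n is therefore always at least 1/(a+1), is
   at most a/(a+1) up to an error O(log n / n), and the two extreme values are
   approached at the right ends a^(2k+1) of the blocks and just before their
   left ends a^(2k). *)

From Stdlib Require Import Reals Lia Lra ZArith Arith List Permutation ClassicalDescription.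
Import ListNotations.
Open Scope nat_scope.

Section BlockConcatenation.

Variable blocks : nat -> list nat.

Definition block_start (b : nat) : nat := length (concat (map blocks (seq 0 b))).

Definition in_block (b n : nat) : Prop := block_start b <= n < block_start (S b).

Lemma block_start_succ b : block_start (S b) = block_start b + length (blocks b).
Proof.
  unfold block_start. rewrite seq_S, map_app, concat_app, length_app.
  simpl. rewrite app_nil_r. reflexivity.
Qed.

Lemma block_start_le b b' : b <= b' -> block_start b <= block_start b'.
Proof. induction 1; [lia | rewrite block_start_succ; lia]. Qed.

Lemma in_block_le b b' n n' : in_block b n -> in_block b' n' -> n <= n' -> b <= b'.
Proof.
  intros Hn Hn' Hle. destruct (Nat.le_gt_cases b b') as [|Hlt]; [assumption|].
  pose proof (block_start_le (S b') b Hlt). unfold in_block in *. lia.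
Qed.

Hypothesis blocks_nonempty : forall b, blocks b <> [].

Lemma block_length_pos b : 1 <= length (blocks b).
Proof. destruct (blocks b) eqn:E; [now destruct (blocks_nonempty b) | simpl; lia]. Qed.

Lemma block_start_ge b : b <= block_start b.
Proof. induction b; [lia | rewrite block_start_succ; pose proof (block_length_pos b); lia]. Qed.

Lemma concat_stream_in_block b n :
  in_block b n -> concat_stream blocks n = nth (n - block_start b) (blocks b) 0.
Proof.
  intros [Hlo Hhi]. rewrite block_start_succ in Hhi. unfold concat_stream.
  pose proof (block_start_ge b).
  replace (n + 1) with (b + S (n - b)) by lia.
  rewrite seq_app, map_app, concat_app. simpl.
  rewrite app_nth2 by (unfold block_start in *; lia).
  fold (block_start b). rewrite app_nth1 by lia. reflexivity.
Qed.

Lemma concat_stream_In b n : in_block b n -> In (concat_stream blocks n) (blocks b).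
Proof.
  intro Hn. rewrite (concat_stream_in_block b n Hn). apply nth_In.
  destruct Hn as [Hlo Hhi]. rewrite block_start_succ in Hhi. lia.
Qed.

Lemma concat_stream_hits b x : In x (blocks b) -> exists n, concat_stream blocks n = x.
Proof.
  intro Hx. destruct (In_nth _ _ 0 Hx) as [o [Ho Eo]].
  exists (block_start b + o).
  rewrite (concat_stream_in_block b) by (split; rewrite ?block_start_succ; lia).
  rewrite Nat.add_comm, Nat.add_sub. exact Eo.
Qed.

Lemma no_AP3_in_block b i0 i1 i2 (d : Z) :
  ~ list_has_AP 3 (blocks b) -> in_block b i0 -> in_block b i2 ->
  i0 < i1 -> i1 < i2 -> d <> 0%Z ->
  (Z.of_nat (concat_stream blocks i1) - Z.of_nat (concat_stream blocks i0))%Z = d ->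
  (Z.of_nat (concat_stream blocks i2) - Z.of_nat (concat_stream blocks i1))%Z = d ->
  False.
Proof.
  intros hno3 H0 H2 H01 H12 Hd E1 E2.
  assert (H1 : in_block b i1) by (unfold in_block in *; lia).
  rewrite (concat_stream_in_block b i0 H0) in E1.
  rewrite (concat_stream_in_block b i1 H1) in E1, E2.
  rewrite (concat_stream_in_block b i2 H2) in E2.
  destruct H0 as [H0 _]. destruct H2 as [_ H2]. rewrite block_start_succ in H2.
  apply hno3.
  exists (fun j => match j with
                   | 0 => i0 - block_start b
                   | 1 => i1 - block_start b
                   | _ => i2 - block_start b end).
  split; [split|].
  - intros [|[|m]] Hm; simpl; lia.
  - exists d. split; [exact Hd|]. intros [|[|m]] Hm; [exact E1 | exact E2 | lia].
  - intros [|[|m]] Hm; simpl; lia.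
Qed.

Lemma in_block_exists n : exists b, in_block b n.
Proof.
  induction n as [|n [b Hb]].
  - exists 0. split; rewrite ?block_start_succ; pose proof (block_length_pos 0); cbn; lia.
  - destruct (Nat.eq_dec (S n) (block_start (S b))) as [E|E].
    + exists (S b). split; rewrite ?(block_start_succ (S b)); pose proof (block_length_pos (S b)); lia.
    + exists b. unfold in_block in *. lia.
Qed.

Lemma concat_stream_range x :
  (exists n, concat_stream blocks n = x) <-> exists b, In x (blocks b).
Proof.
  split.
  - intros [n <-]. destruct (in_block_exists n) as [b Hb].
    exists b. exact (concat_stream_In b n Hb).
  - intros [b Hx]. exact (concat_stream_hits b x Hx).
Qed.

Hypothesis blocks_pos : forall b x, In x (blocks b) -> 0 < x.
Hypothesis blocks_doubling :
  forall b b' x y, b < b' -> In x (blocks b) -> In y (blocks b') -> 2 * x <= y.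

(* If v_k lay in a later block than v_j, then v_j - v_i = v_k - v_j >= v_j,
   leaving v_i <= 0. *)
Lemma AP_step_same_block b0 b1 b2 i0 i1 i2 :
  in_block b0 i0 -> in_block b1 i1 -> in_block b2 i2 ->
  i1 <= i2 ->
  (Z.of_nat (concat_stream blocks i1) - Z.of_nat (concat_stream blocks i0))%Z =
  (Z.of_nat (concat_stream blocks i2) - Z.of_nat (concat_stream blocks i1))%Z ->
  b1 = b2.
Proof.
  intros H0 H1 H2 H12 E.
  pose proof (in_block_le b1 b2 i1 i2 H1 H2 H12).
  destruct (Nat.eq_dec b1 b2) as [|Hne]; [assumption|].
  pose proof (blocks_pos b0 _ (concat_stream_In b0 i0 H0)).
  pose proof (blocks_doubling b1 b2 _ _ ltac:(lia)
                (concat_stream_In b1 i1 H1) (concat_stream_In b2 i2 H2)).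
  lia.
Qed.

Lemma concat_stream_no_AP4 :
  (forall b, ~ list_has_AP 3 (blocks b)) -> ~ stream_has_AP 4 (concat_stream blocks).
Proof.
  intros hno3 [idx [Hinc [d [Hd Hdiff]]]].
  pose proof (Hinc 0 ltac:(lia)). pose proof (Hinc 1 ltac:(lia)).
  pose proof (Hinc 2 ltac:(lia)).
  pose proof (Hdiff 0 ltac:(lia)) as D0. pose proof (Hdiff 1 ltac:(lia)) as D1.
  pose proof (Hdiff 2 ltac:(lia)) as D2. simpl in *.
  destruct (in_block_exists (idx 0)) as [b0 B0].
  destruct (in_block_exists (idx 1)) as [b1 B1].
  destruct (in_block_exists (idx 2)) as [b2 B2].
  destruct (in_block_exists (idx 3)) as [b3 B3].
  assert (b1 = b2) by (apply (AP_step_same_block b0 b1 b2 (idx 0) (idx 1) (idx 2)); try assumption; lia).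
  assert (b2 = b3) by (apply (AP_step_same_block b1 b2 b3 (idx 1) (idx 2) (idx 3)); try assumption; lia).
  subst b2 b3.
  exact (no_AP3_in_block b1 (idx 1) (idx 2) (idx 3) d (hno3 b1) B1 B3
           ltac:(lia) ltac:(lia) Hd D1 D2).
Qed.

Lemma concat_stream_injective :
  (forall b, NoDup (blocks b)) ->
  forall i j, concat_stream blocks i = concat_stream blocks j -> i = j.
Proof.
  intros hnodup i j E.
  destruct (in_block_exists i) as [b Bi]. destruct (in_block_exists j) as [b' Bj].
  pose proof (concat_stream_In b i Bi) as Vi. pose proof (concat_stream_In b' j Bj) as Vj.
  pose proof (blocks_pos b _ Vi).
  destruct (Nat.lt_total b b') as [Hlt|[<-|Hlt]].
  - pose proof (blocks_doubling b b' _ _ Hlt Vi Vj). lia.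
  - rewrite (concat_stream_in_block b i Bi), (concat_stream_in_block b j Bj) in E.
    pose proof (hnodup b) as ND. rewrite (NoDup_nth _ 0) in ND.
    destruct Bi as [Bi Bi']. destruct Bj as [Bj Bj']. rewrite block_start_succ in Bi', Bj'.
    pose proof (ND (i - block_start b) (j - block_start b) ltac:(lia) ltac:(lia) E). lia.
  - pose proof (blocks_doubling b' b _ _ Hlt Vj Vi). lia.
Qed.

End BlockConcatenation.

Lemma pow_pos a k : 1 <= a -> 1 <= a ^ k.
Proof. intro. change 1 with (a ^ 0). apply Nat.pow_le_mono_r; lia. Qed.

Lemma pow_add1 a k : a ^ (k + 1) = a * a ^ k.
Proof. rewrite Nat.add_1_r. apply Nat.pow_succ_r'. Qed.

Section SaBlocks.

Variable a : nat.
Hypothesis ha : 2 <= a.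

Lemma In_Sa_block i x : In x (Sa_block a i) <-> a ^ (2 * i) <= x <= a ^ (2 * i + 1).
Proof.
  unfold Sa_block. rewrite in_seq. pose proof (pow_pos a (2 * i) ltac:(lia)).
  rewrite pow_add1. nia.
Qed.

Lemma Sa_block_doubling i i' x y :
  i < i' -> In x (Sa_block a i) -> In y (Sa_block a i') -> 2 * x <= y.
Proof.
  rewrite !In_Sa_block. intros Hi Hx Hy.
  assert (Hgap : a ^ (2 * i + 1 + 1) <= a ^ (2 * i')) by (apply Nat.pow_le_mono_r; lia).
  rewrite pow_add1 in Hgap. nia.
Qed.

Variable sigma : nat -> list nat.
Hypothesis hperm : forall i, Permutation (sigma i) (Sa_block a i).

Lemma In_sigma i x : In x (sigma i) <-> a ^ (2 * i) <= x <= a ^ (2 * i + 1).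
Proof.
  rewrite <- In_Sa_block. split; apply Permutation_in; [|symmetry]; apply hperm.
Qed.

Lemma sigma_nonempty i : sigma i <> [].
Proof.
  intro E. assert (H : In (a ^ (2 * i)) (sigma i)).
  { apply In_sigma. rewrite pow_add1. pose proof (pow_pos a (2 * i) ltac:(lia)). nia. }
  rewrite E in H. exact H.
Qed.

Lemma sigma_pos i x : In x (sigma i) -> 0 < x.
Proof. rewrite In_sigma. pose proof (pow_pos a (2 * i) ltac:(lia)). lia. Qed.

Lemma sigma_doubling i i' x y :
  i < i' -> In x (sigma i) -> In y (sigma i') -> 2 * x <= y.
Proof.
  intros Hi Hx Hy.
  apply (Sa_block_doubling i i' x y Hi); eapply Permutation_in; eauto.
Qed.

Lemma sigma_NoDup i : NoDup (sigma i).
Proof. apply (Permutation_NoDup (Permutation_sym (hperm i))), seq_NoDup. Qed.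

Lemma Sa_concat_no_AP4 :
  (forall i, ~ list_has_AP 3 (sigma i)) -> ~ stream_has_AP 4 (concat_stream sigma).
Proof. exact (concat_stream_no_AP4 sigma sigma_nonempty sigma_pos sigma_doubling). Qed.

Lemma Sa_four_free : (forall i, ~ list_has_AP 3 (sigma i)) -> n_free 4 (In_Sa a).
Proof.
  intro hno3. split.
  { intros x [i Hi]. pose proof (pow_pos a (2 * i) ltac:(lia)). lia. }
  right. exists (concat_stream sigma). split; [|split].
  - exact (concat_stream_injective sigma sigma_nonempty sigma_pos sigma_doubling sigma_NoDup).
  - intro x. rewrite (concat_stream_range sigma sigma_nonempty).
    unfold In_Sa. split; intros [i Hi]; exists i; apply In_sigma; exact Hi.
  - exact (Sa_concat_no_AP4 hno3).
Qed.

End SaBlocks.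

Lemma countA_succ (T : nat -> Prop) n :
  countA T (S n) = countA T n + (if excluded_middle_informative (T (S n)) then 1 else 0).
Proof.
  unfold countA. rewrite seq_S, filter_app, length_app. simpl.
  destruct (excluded_middle_informative (T (S n))); simpl; lia.
Qed.

Lemma countA_add_full (T : nat -> Prop) m t :
  (forall x, m < x <= m + t -> T x) -> countA T (m + t) = countA T m + t.
Proof.
  induction t as [|t IH]; intro HT; [now rewrite !Nat.add_0_r|].
  rewrite Nat.add_succ_r, countA_succ, IH by (intros; apply HT; lia).
  destruct (excluded_middle_informative (T (S (m + t)))) as [_|HnT]; [lia|].
  exfalso. apply HnT, HT. lia.
Qed.

Lemma countA_add_empty (T : nat -> Prop) m t :
  (forall x, m < x <= m + t -> ~ T x) -> countA T (m + t) = countA T m.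
Proof.
  induction t as [|t IH]; intro HT; [now rewrite Nat.add_0_r|].
  rewrite Nat.add_succ_r, countA_succ, IH by (intros; apply HT; lia).
  destruct (excluded_middle_informative (T (S (m + t)))) as [HT'|_]; [|lia].
  exfalso. apply (HT (S (m + t))); [lia | exact HT'].
Qed.

Lemma mul_le_of_sq_le x y n : x * x <= n -> y * y <= n -> x * y <= n.
Proof. intros Hx Hy. destruct (Nat.le_ge_cases x y); nia. Qed.

Section SaDensity.

Variable a : nat.
Hypothesis ha : 2 <= a.

Notation A := (countA (In_Sa a)).

Lemma succ_sq_le_pow k : (k + 1) * (k + 1) <= a ^ (2 * k).
Proof.
  pose proof (Nat.pow_gt_lin_r a k ltac:(lia)).
  replace (2 * k) with (k + k) by lia. rewrite Nat.pow_add_r. nia.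
Qed.

Lemma In_Sa_period k x :
  a ^ (2 * k) <= x < a ^ (2 * k + 2) -> (In_Sa a x <-> x <= a ^ (2 * k + 1)).
Proof.
  intro Hx. split.
  - intros [i Hi]. destruct (Nat.lt_trichotomy i k) as [Hlt|[<-|Hgt]]; [|lia|].
    + assert (a ^ (2 * i + 1) < a ^ (2 * k)) by (apply Nat.pow_lt_mono_r; lia). lia.
    + assert (a ^ (2 * k + 2) <= a ^ (2 * i)) by (apply Nat.pow_le_mono_r; lia). lia.
  - intro. exists k. lia.
Qed.

Lemma period_exists n : 1 <= n -> exists k, a ^ (2 * k) <= n < a ^ (2 * k + 2).
Proof.
  induction n as [|n IH]; intro Hn; [lia|].
  destruct (Nat.eq_dec n 0) as [->|Hn0].
  { exists 0. simpl. nia. }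
  destruct (IH ltac:(lia)) as [k Hk].
  destruct (Nat.eq_dec (S n) (a ^ (2 * k + 2))) as [E|E].
  - exists (S k). replace (2 * S k) with (2 * k + 2) by lia.
    assert (a ^ (2 * k + 2) < a ^ (2 * k + 2 + 2)) by (apply Nat.pow_lt_mono_r; lia). lia.
  - exists k. lia.
Qed.

(* The blocks before the k-th one have sizes a^(2i+1) - a^(2i) + 1, whose
   total is (a^(2k) - 1) / (a+1) + k. *)
Lemma count_before_block k : (a + 1) * A (a ^ (2 * k) - 1) = a ^ (2 * k) - 1 + (a + 1) * k.
Proof.
  induction k as [|k IH]; [reflexivity|].
  set (p := a ^ (2 * k)). set (q := a ^ (2 * k + 1)). set (r := a ^ (2 * S k)).
  assert (Hq : q = a * p) by apply pow_add1.
  assert (Hr : r = a * q) by (unfold r, q; rewrite <- pow_add1; f_equal; lia).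
  assert (Hp : 1 <= p) by (apply pow_pos; lia).
  assert (Hfull : A (p - 1 + (q - p + 1)) = A (p - 1) + (q - p + 1)).
  { apply countA_add_full. intros x Hx. exists k. fold p q. nia. }
  assert (Hempty : A (q + (r - 1 - q)) = A q).
  { apply countA_add_empty. intros x Hx.
    rewrite (In_Sa_period k x) by (fold p q; replace (2 * k + 2) with (2 * S k) by lia; fold r; nia).
    fold q. lia. }
  replace (p - 1 + (q - p + 1)) with q in Hfull by nia.
  replace (q + (r - 1 - q)) with (r - 1) in Hempty by nia.
  rewrite Hempty, Hfull. fold p in IH. nia.
Qed.

Lemma count_in_block k n :
  a ^ (2 * k) <= n <= a ^ (2 * k + 1) ->
  (a + 1) * A n + a ^ (2 * k + 1) + 1 = (a + 1) * n + (a + 1) * (k + 1).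
Proof.
  intro Hn. pose proof (count_before_block k). pose proof (pow_pos a (2 * k) ltac:(lia)).
  rewrite (pow_add1 a (2 * k)) in *.
  replace n with (a ^ (2 * k) - 1 + (n - a ^ (2 * k) + 1)) by lia.
  rewrite countA_add_full by (intros x Hx; exists k; rewrite pow_add1; lia).
  nia.
Qed.

Lemma count_in_gap k n :
  a ^ (2 * k + 1) < n < a ^ (2 * k + 2) ->
  (a + 1) * A n + 1 = a ^ (2 * k + 2) + (a + 1) * (k + 1).
Proof.
  intro Hn. set (q := a ^ (2 * k + 1)).
  assert (Hp : a ^ (2 * k) <= q) by (apply Nat.pow_le_mono_r; lia).
  assert (Hr : a ^ (2 * k + 2) = a * q) by (unfold q; rewrite <- pow_add1; f_equal; lia).
  pose proof (count_in_block k q ltac:(lia)).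
  replace n with (q + (n - q)) by lia.
  rewrite countA_add_empty by (intros x Hx; rewrite (In_Sa_period k x); lia).
  nia.
Qed.

Lemma count_lower n : n <= (a + 1) * A n.
Proof.
  destruct (Nat.eq_dec n 0) as [->|Hn]; [lia|].
  destruct (period_exists n ltac:(lia)) as [k Hk].
  destruct (Nat.le_gt_cases n (a ^ (2 * k + 1))).
  - pose proof (count_in_block k n ltac:(lia)). rewrite pow_add1 in *. nia.
  - pose proof (count_in_gap k n ltac:(lia)). lia.
Qed.

Lemma count_upper_log n :
  1 <= n -> exists k, (k + 1) * (k + 1) <= n /\ (a + 1) * A n <= a * n + (a + 1) * (k + 1).
Proof.
  intro Hn. destruct (period_exists n Hn) as [k Hk]. exists k.
  pose proof (succ_sq_le_pow k). split; [lia|].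
  assert (Hr : a ^ (2 * k + 2) = a * a ^ (2 * k + 1)) by (rewrite <- pow_add1; f_equal; lia).
  destruct (Nat.le_gt_cases n (a ^ (2 * k + 1))).
  - pose proof (count_in_block k n ltac:(lia)). rewrite pow_add1 in *. nia.
  - pose proof (count_in_gap k n ltac:(lia)). nia.
Qed.

Lemma count_upper n M : M * M <= n -> (a + 1) * A n * M <= a * n * M + (a + 1) * n.
Proof.
  intro HM. destruct (Nat.eq_dec n 0) as [->|Hn]; [assert (M = 0) by nia; subst M; lia|].
  destruct (count_upper_log n ltac:(lia)) as [k [Hk Hcount]].
  pose proof (mul_le_of_sq_le (k + 1) M n Hk HM). nia.
Qed.

Lemma count_block_end j : a * a ^ (2 * j + 1) <= (a + 1) * A (a ^ (2 * j + 1)).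
Proof.
  pose proof (count_in_block j (a ^ (2 * j + 1))). rewrite pow_add1 in *.
  pose proof (pow_pos a (2 * j) ltac:(lia)). nia.
Qed.

End SaDensity.

Open Scope R_scope.

Lemma INR_ratio_le_add_inv (c n b q M : nat) :
  (0 < n)%nat -> (0 < q)%nat -> (0 < M)%nat ->
  (q * c * M <= b * n * M + q * n)%nat ->
  INR c / INR n <= INR b / INR q + / INR M.
Proof.
  intros Hn Hq HM H. apply le_INR in H. rewrite !plus_INR, !mult_INR in H.
  apply lt_0_INR in Hn, Hq, HM.
  assert (Hden : 0 < INR q * INR n * INR M) by (repeat apply Rmult_lt_0_compat; lra).
  replace (INR c / INR n) with (INR q * INR c * INR M / (INR q * INR n * INR M)) by (field; lra).
  replace (INR b / INR q + / INR M)
    with ((INR b * INR n * INR M + INR q * INR n) / (INR q * INR n * INR M)) by (field; lra).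
  apply Rmult_le_compat_r; [left; apply Rinv_0_lt_compat|]; assumption.
Qed.

Lemma INR_ratio_le (b q c n : nat) :
  (0 < q)%nat -> (0 < n)%nat -> (b * n <= q * c)%nat -> INR b / INR q <= INR c / INR n.
Proof.
  intros Hq Hn H. apply le_INR in H. rewrite !mult_INR in H.
  apply lt_0_INR in Hn, Hq.
  assert (Hden : 0 < INR q * INR n) by (apply Rmult_lt_0_compat; lra).
  replace (INR b / INR q) with (INR b * INR n / (INR q * INR n)) by (field; lra).
  replace (INR c / INR n) with (INR q * INR c / (INR q * INR n)) by (field; lra).
  apply Rmult_le_compat_r; [left; apply Rinv_0_lt_compat|]; assumption.
Qed.

Lemma Sa_upper_density a :
  (2 <= a)%nat -> is_limsup (density_ratio (In_Sa a)) (INR a / INR (S a)).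
Proof.
  intro ha. unfold density_ratio. split.
  - intros eps Heps. destruct (archimed_cor1 eps Heps) as [M [HM HM0]].
    exists (Nat.max 1 (M * M)). intros n Hn.
    pose proof (count_upper a ha n M ltac:(lia)).
    pose proof (INR_ratio_le_add_inv (countA (In_Sa a) n) n a (S a) M
                  ltac:(lia) ltac:(lia) HM0 ltac:(lia)). lra.
  - intros eps Heps N. pose proof (Nat.pow_gt_lin_r a (2 * N + 1) ltac:(lia)).
    exists (a ^ (2 * N + 1))%nat. split; [lia|].
    pose proof (count_block_end a ha N).
    pose proof (INR_ratio_le a (S a) (countA (In_Sa a) (a ^ (2 * N + 1))) (a ^ (2 * N + 1))
                  ltac:(lia) ltac:(lia) ltac:(lia)). lra.
Qed.

Lemma Sa_lower_density a :
  (2 <= a)%nat -> is_liminf (density_ratio (In_Sa a)) (1 / INR (S a)).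
Proof.
  intro ha. unfold density_ratio. split.
  - intros eps Heps. exists 1%nat. intros n Hn.
    pose proof (count_lower a ha n).
    pose proof (INR_ratio_le 1 (S a) (countA (In_Sa a) n) n ltac:(lia) ltac:(lia) ltac:(lia)).
    simpl INR in *. lra.
  - intros eps Heps N. destruct (archimed_cor1 eps Heps) as [M [HM HM0]].
    set (j := (M + N + 1)%nat).
    pose proof (succ_sq_le_pow a ha j). pose proof (count_before_block a ha j).
    exists (a ^ (2 * j) - 1)%nat. split; [nia|].
    pose proof (INR_ratio_le_add_inv (countA (In_Sa a) (a ^ (2 * j) - 1)) (a ^ (2 * j) - 1)
                  1 (S a) M ltac:(nia) ltac:(lia) HM0 ltac:(nia)).
    simpl INR in *. lra.
Qed.

Theorem mainTheorem8 (a : nat) (ha : (2 <= a)%nat) (sigma : nat -> list nat)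
  (hperm : forall i, Permutation (sigma i) (Sa_block a i))
  (hno3 : forall i, ~ list_has_AP 3 (sigma i)) :
  (~ stream_has_AP 4 (concat_stream sigma) /\ n_free 4 (In_Sa a)) /\
  is_limsup (density_ratio (In_Sa a)) (INR a / (INR a + 1)) /\
  is_liminf (density_ratio (In_Sa a)) (1 / (INR a + 1)).
Proof.
  rewrite <- (S_INR a).
  split; [split|split].
  - exact (Sa_concat_no_AP4 a ha sigma hperm hno3).
  - exact (Sa_four_free a ha sigma hperm hno3).
  - exact (Sa_upper_density a ha).
  - exact (Sa_lower_density a ha).
Qed.
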